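(* For every regular language $L\subseteq\Sigma^*$, there is an isomorphism of $\mathbf{JSL}$-dfas $\mathcal{P}(\mathrm{Syn}(L^r))\cong[\mathrm{BLRQ}(L)]^{\mathsf{op}}$ given by \[\{[w_1]_{L^r},\ldots,[w_n]_{L^r}\}\mapsto\bigcap_{i=1}^n\overline{\mathrm{At}(w_i^r)},\] where $\mathrm{At}(x)$ is the unique atom of the boolean algebra $\mathrm{BLRQ}(L)$ containing the word $x$.
   Context: $w^r$ is the reversal of $w$, $L^r=\{w^r:w\in L\}$, $\overline{K}=\Sigma^*\setminus K$, $u^{-1}Lv^{-1}=\{w:uwv\in L\}$. $\mathrm{BLRQ}(L)$ is the boolean subalgebra of $\mathcal{P}(\Sigma^* )$ generated by all two-sided derivatives $u^{-1}Lv^{-1}$, viewed as a $\mathbf{JSL}$-dfa with order $\subseteq$, transitions $K\mapsto a^{-1}K$, initial state $L$, final states the $K$ containing $\epsilon$. The syntactic congruence of a language $K$ is $v\equiv_K w\iff(\forall x,y:\ xvy\in K\Leftrightarrow xwy\in K)$; $[w]_K$ denotes the class of $w$ and $\mathrm{Syn}(K)=\Sigma^*/{\equiv_K}$ is the syntactic monoid, viewed as a dfa with transitions $[w]_K\xrightarrow{a}[wa]_K$, initial state $[\epsilon]_K$, final states $\{[w]_K:w\in K\}$. For a dfa $D$ with state set $Q$, $\mathcal{P}(D)$ is the $\mathbf{JSL}$-dfa with states $(\mathcal{P}(Q),\cup)$, transitions $X\mapsto\delta_a[X]$, initial state $\{q_0\}$, final states the subsets meeting the final states. A $\mathbf{JSL}$-dfa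 is a finite semilattice with join-preserving transitions, an initial state $s_0$ and final states $\{s:s\not\le s_f\}$ for some $s_f$; morphisms are join-preserving maps preserving transitions, initial and final states (both ways). The dual $A^{\mathsf{op}}$ has reversed order, transitions $\delta_a^*(s)=$ largest $t$ with $\delta_a(t)\le s$, initial state the largest non-final state of $A$, final states $\{s:s_0\not\le s\}$. *)

From mathcomp Require Import all_boot.
From Stdlib Require Import ClassicalEpsilon.

Set Implicit Arguments.
Unset Strict Implicit.
Unset Printing Implicit Defensive.

Definition lang (A : Type) := seq A -> Prop.

Definition regular (A : finType) (L : lang A) : Prop :=
  exists (Q : finType) (d : Q -> A -> Q) (q0 : Q) (F : pred Q),
    forall w, L w <-> F (foldl d q0 w).

Definition lrev (A : Type) (L : lang A) : lang A := fun w => L (rev w).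

Inductive BLRQ (A : Type) (L : lang A) : lang A -> Prop :=
| BLRQ_der (u v : seq A) : BLRQ L (fun w => L (u ++ w ++ v))
| BLRQ_empty : BLRQ L (fun _ => False)
| BLRQ_compl K : BLRQ L K -> BLRQ L (fun w => ~ K w)
| BLRQ_union K1 K2 : BLRQ L K1 -> BLRQ L K2 -> BLRQ L (fun w => K1 w \/ K2 w)
| BLRQ_ext K K' : BLRQ L K -> (forall w, K w <-> K' w) -> BLRQ L K'.

Lemma BLRQ_lder (A : Type) (L : lang A) (a : A) K :
  BLRQ L K -> BLRQ L (fun w => K (a :: w)).
Proof.
elim=> [u v| |K1 _ IH|K1 K2 _ IH1 _ IH2|K1 K2 _ IH H].
- apply: (BLRQ_ext (BLRQ_der L (rcons u a) v)) => w.
  by rewrite cat_rcons.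
- exact: BLRQ_empty.
- exact: BLRQ_compl.
- exact: BLRQ_union.
- by apply: (BLRQ_ext IH) => w; apply: H.
Qed.

Lemma BLRQ_self (A : Type) (L : lang A) : BLRQ L L.
Proof. by apply: (BLRQ_ext (BLRQ_der L [::] [::])) => w; rewrite /= cats0. Qed.

(* Atoms of the boolean algebra BLRQ(L) (ordered by inclusion):
   minimal nonempty members. *)
Definition is_atom (A : Type) (L : lang A) (K : lang A) : Prop :=
  BLRQ L K /\ (exists w, K w) /\
  forall K', BLRQ L K' -> (forall w, K' w -> K w) ->
    (forall w, ~ K' w) \/ (forall w, K w -> K' w).

Definition At (A : Type) (L : lang A) (x : seq A) : lang A :=
  epsilon (inhabits (fun _ : seq A => False))
          (fun K => is_atom L K /\ K x).

Record jsl_dfa (A : Type) := JSLDfa {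
  jstate : Type;
  jjoin : jstate -> jstate -> jstate;
  jbot : jstate;
  jdelta : A -> jstate -> jstate;
  jinit : jstate;
  jfinal : jstate -> Prop }.

Definition jle (A : Type) (D : jsl_dfa A) (s t : jstate D) : Prop :=
  jjoin s t = t.

Definition is_largest (T : Type) (le : T -> T -> Prop) (P : T -> Prop) (t : T) :=
  P t /\ forall t', P t' -> le t' t.

Definition jlargest (A : Type) (D : jsl_dfa A) (P : jstate D -> Prop) : jstate D :=
  epsilon (inhabits (jbot D)) (is_largest (@jle A D) P).

Definition jop (A : Type) (D : jsl_dfa A) : jsl_dfa A := {|
  jstate := jstate D;
  jjoin := fun x y => jlargest (fun t => jle t x /\ jle t y);
  jbot := jlargest (fun _ => True);
  jdelta := fun a s => jlargest (fun t => jle (jdelta a t) s);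
  jinit := jlargest (fun s => ~ jfinal s);
  jfinal := fun s => ~ jle (jinit D) s |}.

Definition jsl_morphism (A : Type) (D1 D2 : jsl_dfa A)
    (f : jstate D1 -> jstate D2) : Prop :=
  [/\ forall x y, f (jjoin x y) = jjoin (f x) (f y),
      f (jbot D1) = jbot D2,
      forall a x, f (jdelta a x) = jdelta a (f x),
      f (jinit D1) = jinit D2
    & forall x, jfinal (f x) <-> jfinal x].

Definition jsl_iso (A : Type) (D1 D2 : jsl_dfa A)
    (f : jstate D1 -> jstate D2) : Prop :=
  jsl_morphism f /\ bijective f.

Definition BLRQ_state (A : Type) (L : lang A) := {K : lang A | BLRQ L K}.

Definition BLRQ_dfa (A : Type) (L : lang A) : jsl_dfa A := {|
  jstate := BLRQ_state L;
  jjoin := fun K1 K2 => exist _ (fun w => proj1_sig K1 w \/ proj1_sig K2 w)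
             (BLRQ_union (proj2_sig K1) (proj2_sig K2));
  jbot := exist _ (fun _ => False) (BLRQ_empty L);
  jdelta := fun a K => exist _ (fun w => proj1_sig K (a :: w))
             (BLRQ_lder a (proj2_sig K));
  jinit := exist _ L (BLRQ_self L);
  jfinal := fun K => proj1_sig K [::] |}.

Definition syn_eq (A : Type) (K : lang A) (v w : seq A) : Prop :=
  forall x y, K (x ++ v ++ y) <-> K (x ++ w ++ y).

Definition syn_class (A : Type) (K : lang A) (w : seq A) : lang A :=
  fun v => syn_eq K v w.

Definition Syn (A : Type) (K : lang A) :=
  {S : lang A | exists w, S = syn_class K w}.

Definition syn_cls (A : Type) (K : lang A) (w : seq A) : Syn K :=
  exist _ (syn_class K w) (ex_intro _ w erefl).

Definition PSyn_dfa (A : Type) (K : lang A) : jsl_dfa A := {|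
  jstate := Syn K -> Prop;
  jjoin := fun X Y c => X c \/ Y c;
  jbot := fun _ => False;
  jdelta := fun a X c => exists w, X (syn_cls K w) /\ c = syn_cls K (rcons w a);
  jinit := fun c => c = syn_cls K [::];
  jfinal := fun X => exists c, X c /\ exists w, c = syn_cls K w /\ K w |}.

From mathcomp Require Import all_boot.
From Stdlib Require Import ClassicalEpsilon Classical FunctionalExtensionality
  PropExtensionality ProofIrrelevance.

Set Implicit Arguments.
Unset Strict Implicit.
Unset Printing Implicit Defensive.

(* The map w |-> [w^r]_{L^r} identifies the syntactic monoid of L^r with the
   classes of the syntactic congruence of L, since x ==_L y iff
   x^r ==_{L^r} y^r.  Every member of BLRQ(L) is a union of ==_L-classes;
   conversely, when L is regular, each class is a finite boolean combination
   of derivatives u^-1 L v^-1 (it is cut out by the finitely many pairs of a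
   reachable state and a transformation of a dfa for L), so BLRQ(L) is
   exactly the family of ==_L-saturated languages and its atoms are the
   ==_L-classes.  The isomorphism therefore sends a set X of classes of L^r
   to the saturated language {x | [x^r]_{L^r} \notin X}; complementation
   turns unions into intersections, which is the join of the dual, and the
   other structure maps (transitions, initial and final states) are
   checked one by one against the extremal descriptions of the dual. *)

Section SyntacticCongruence.
Variable A : Type.
Implicit Types (K L : lang A) (u v w x y : seq A).

Lemma syn_refl L x : syn_eq L x x.
Proof. by []. Qed.

Lemma syn_sym L x y : syn_eq L x y -> syn_eq L y x.
Proof. by move=> H u v; apply: iff_sym. Qed.

Lemma syn_trans L x y z : syn_eq L x y -> syn_eq L y z -> syn_eq L x z.
Proof. by move=> H1 H2 u v; apply: iff_trans (H1 u v) (H2 u v). Qed.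

Lemma syn_eq_rev L v w : syn_eq (lrev L) v w <-> syn_eq L (rev v) (rev w).
Proof.
split=> H u z.
- by have := H (rev z) (rev u); rewrite /lrev !rev_cat !revK -!catA.
- by rewrite /lrev !rev_cat -!catA; apply: H.
Qed.

Lemma syn_cls_eq K v w : syn_cls K v = syn_cls K w <-> syn_eq K v w.
Proof.
split=> [E | Hvw].
- change (syn_class K w v).
  by have /= <- := congr1 (fun c => proj1_sig c v) E; apply: syn_refl.
- apply: subset_eq_compat; apply: functional_extensionality => u.
  apply: propositional_extensionality.
  by split=> Hu; [apply: syn_trans Hu Hvw | apply: syn_trans Hu (syn_sym Hvw)].
Qed.

Lemma syn_cls_surj K (c : Syn K) : exists w, c = syn_cls K w.
Proof. by case: c => C [w EC]; exists w; subst C; apply: subset_eq_compat. Qed.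

(* [x]^r := [x^r]_{L^r}: the class of Syn(L^r) attached to a word x;
   it identifies Syn(L^r) with the ==_L-classes. *)
Definition rcls L x : Syn (lrev L) := syn_cls (lrev L) (rev x).

Lemma rcls_eq L x y : rcls L x = rcls L y <-> syn_eq L x y.
Proof. by rewrite syn_cls_eq syn_eq_rev !revK. Qed.

Lemma syn_cls_rcls L w : syn_cls (lrev L) w = rcls L (rev w).
Proof. by rewrite /rcls revK. Qed.

Lemma rcls_surj L (c : Syn (lrev L)) : exists x, c = rcls L x.
Proof. by have [w ->] := syn_cls_surj c; exists (rev w); apply: syn_cls_rcls. Qed.

Lemma rcls_cons L a x : rcls L (a :: x) = syn_cls (lrev L) (rcons (rev x) a).
Proof. by rewrite /rcls rev_cons. Qed.

End SyntacticCongruence.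

Section BooleanClosure.
Variables (A : Type) (L : lang A).
Implicit Types (K : lang A) (x y : seq A).

Definition saturated K := forall x y, syn_eq L x y -> K x -> K y.

Lemma BLRQ_saturated K : BLRQ L K -> saturated K.
Proof.
elim=> [u v| |K1 _ IH|K1 K2 _ IH1 _ IH2|K1 K2 _ IH H] x y Hxy //=.
- exact: (proj1 (Hxy u v)).
- by move=> Hn Hy; apply/Hn/(IH _ _ (syn_sym Hxy) Hy).
- by case=> H; [left; apply: IH1 Hxy H | right; apply: IH2 Hxy H].
- by move=> /H Hx; apply/H; apply: IH Hxy Hx.
Qed.

Lemma BLRQ_full : BLRQ L (fun _ => True).
Proof. by apply: (BLRQ_ext (BLRQ_compl (BLRQ_empty L))) => w; split=> // _ []. Qed.

Lemma BLRQ_inter K1 K2 : BLRQ L K1 -> BLRQ L K2 -> BLRQ L (fun w => K1 w /\ K2 w).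
Proof.
move=> H1 H2.
apply: (BLRQ_ext (BLRQ_compl (BLRQ_union (BLRQ_compl H1) (BLRQ_compl H2)))) => w.
by have := classic (K1 w); have := classic (K2 w); tauto.
Qed.

Lemma BLRQ_forall_fin (I : finType) (P : I -> lang A) :
  (forall i, BLRQ L (P i)) -> BLRQ L (fun x => forall i, P i x).
Proof.
move=> HP.
have Hseq (s : seq I) : BLRQ L (fun x => forall i, i \in s -> P i x).
  elim: s => [|i0 s IH]; first by apply: (BLRQ_ext BLRQ_full).
  apply: (BLRQ_ext (BLRQ_inter (HP i0) IH)) => x; split.
  - by case=> H0 Hs i; rewrite in_cons => /orP [/eqP -> //|]; apply: Hs.
  - move=> H; split=> [|i Hi]; apply: H; first exact: mem_head.
    by rewrite in_cons Hi orbT.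
apply: (BLRQ_ext (Hseq (enum I))) => x.
by split=> H i; [apply: H; rewrite mem_enum | move=> _; apply: H].
Qed.

Lemma BLRQ_exists_fin (I : finType) (P : I -> lang A) :
  (forall i, BLRQ L (P i)) -> BLRQ L (fun x => exists i, P i x).
Proof.
move=> HP; have HnP i : BLRQ L (fun x => ~ P i x) by apply: BLRQ_compl.
apply: (BLRQ_ext (BLRQ_compl (BLRQ_forall_fin HnP))) => x.
by split=> [/not_all_not_ex | [i Hi] Hn] //; apply: Hn Hi.
Qed.

Lemma BLRQ_der_iff u v (c : Prop) : BLRQ L (fun x => L (u ++ x ++ v) <-> c).
Proof.
case: (classic c) => Hc.
- by apply: (BLRQ_ext (BLRQ_der L u v)) => x; tauto.
- by apply: (BLRQ_ext (BLRQ_compl (BLRQ_der L u v))) => x; tauto.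
Qed.

End BooleanClosure.

Section BLRQ_order.
Variables (A : Type) (L : lang A).
Implicit Types (s t : jstate (BLRQ_dfa L)).

Lemma BLRQ_state_ext s t : (forall w, proj1_sig s w <-> proj1_sig t w) -> s = t.
Proof.
move=> H; apply: eq_sig_hprop => [K p q|]; first exact: proof_irrelevance.
by apply: functional_extensionality => w; apply: propositional_extensionality.
Qed.

Lemma jle_BLRQ s t : jle s t <-> (forall w, proj1_sig s w -> proj1_sig t w).
Proof.
split=> [E w Hs | H].
- by have /= <- := congr1 (fun z => proj1_sig z w) E; left.
- by apply: BLRQ_state_ext => w /=; split=> [[/H|] | ]; last right.
Qed.

Lemma jlargest_BLRQ (P : jstate (BLRQ_dfa L) -> Prop) t :
  P t -> (forall t', P t' -> forall w, proj1_sig t' w -> proj1_sig t w) ->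
  t = jlargest P.
Proof.
move=> Pt Hmax.
have Ht : is_largest (@jle A (BLRQ_dfa L)) P t by split=> // t' /Hmax/jle_BLRQ.
have [Pm Hm] := epsilon_spec (inhabits (jbot (BLRQ_dfa L))) _ (ex_intro _ t Ht).
apply: BLRQ_state_ext => w; split; last exact: Hmax.
exact: (proj1 (jle_BLRQ _ _) (Hm t Pt)).
Qed.

End BLRQ_order.

Section RegularLanguage.
Variables (A : Type) (L : lang A) (Q : finType) (d : Q -> A -> Q) (q0 : Q)
  (F : pred Q).
Hypothesis HL : forall w, L w = F (foldl d q0 w).
Implicit Types (K : lang A) (u v w x y : seq A).

Definition tau x : {ffun Q -> Q} := [ffun q => foldl d q x].

(* The acceptance test after reading x from state k.1 and then applying k.2;
   the pairs k reached as (q0.u, tau v) encode the contexts (u, v). *)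
Definition ctx_test (k : Q * {ffun Q -> Q}) x : bool := F (k.2 (tau x k.1)).

Definition reachable_ctx (k : Q * {ffun Q -> Q}) :=
  exists u v, k = (foldl d q0 u, tau v).

Lemma L_ctx_test u x v : L (u ++ x ++ v) = ctx_test (foldl d q0 u, tau v) x.
Proof. by rewrite HL /ctx_test /= !ffunE !foldl_cat. Qed.

Lemma tau_syn x y : tau x = tau y -> syn_eq L x y.
Proof. by move=> E u v; rewrite !L_ctx_test /ctx_test E. Qed.

Lemma syn_class_BLRQ y : BLRQ L (fun x => syn_eq L x y).
Proof.
have Hk k : BLRQ L (fun x => reachable_ctx k -> (ctx_test k x <-> ctx_test k y)).
  case: (classic (reachable_ctx k)) => [[u [v ->]] | Hk].
  - apply: (BLRQ_ext (BLRQ_der_iff L u v (L (u ++ y ++ v)))) => x.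
    by rewrite !L_ctx_test; split=> [H _ | H] //; apply: H; exists u, v.
  - by apply: (BLRQ_ext (BLRQ_full L)).
apply: (BLRQ_ext (BLRQ_forall_fin Hk)) => x; split.
- by move=> H u v; rewrite !L_ctx_test; apply: H; exists u, v.
- by move=> H k [u [v ->]]; rewrite -!L_ctx_test.
Qed.

Lemma saturated_BLRQ K : saturated L K -> BLRQ L K.
Proof.
move=> HK.
pose P (f : {ffun Q -> Q}) x := exists y, [/\ K y, tau y = f & syn_eq L x y].
have HP f : BLRQ L (P f).
  case: (classic (exists y0, K y0 /\ tau y0 = f)) => [[y0 [Ky0 Ty0]] | Hn].
  - apply: (BLRQ_ext (syn_class_BLRQ y0)) => x; split=> [Hx | [y [Ky Ty Hxy]]].
    + by exists y0.
    + by apply: syn_trans Hxy (tau_syn _); rewrite Ty Ty0.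
  - apply: (BLRQ_ext (BLRQ_empty L)) => x; split=> // [[y [Ky Ty _]]].
    by apply: Hn; exists y.
apply: (BLRQ_ext (BLRQ_exists_fin HP)) => x; split.
- by case=> f [y [Ky _ Hxy]]; apply: HK (syn_sym Hxy) Ky.
- by move=> Kx; exists (tau x), x.
Qed.

Lemma syn_class_atom x : is_atom L (fun z => syn_eq L z x).
Proof.
split; first exact: syn_class_BLRQ.
split=> [|K' HK' Hsub]; first by exists x.
case: (classic (exists w, K' w)) => [[w0 Hw0] | Hn].
- right=> w Hw; apply: (BLRQ_saturated HK') (Hw0).
  exact: syn_trans (Hsub _ Hw0) (syn_sym Hw).
- by left=> w Hw; apply: Hn; exists w.
Qed.

Lemma At_class x z : At L x z <-> syn_eq L z x.
Proof.
have [[HB [_ Hmin]] Hx] : is_atom L (At L x) /\ At L x x :=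
  epsilon_spec _ (fun K => is_atom L K /\ K x)
    (ex_intro _ _ (conj (syn_class_atom x) (syn_refl L x))).
split=> [Hz | Hzx]; last exact: (BLRQ_saturated HB) (syn_sym Hzx) Hx.
have [Hempty | Hall] := Hmin _ (syn_class_BLRQ x)
  (fun w Hw => BLRQ_saturated HB (syn_sym Hw) Hx).
- by case: (Hempty x).
- exact: Hall.
Qed.

Definition dual_lang (X : Syn (lrev L) -> Prop) : lang A := fun x => ~ X (rcls L x).

Lemma dual_lang_BLRQ X : BLRQ L (dual_lang X).
Proof.
apply: saturated_BLRQ => x y Hxy HX HY; apply: HX.
by have /rcls_eq -> : syn_eq L x y by [].
Qed.

Definition phi (X : jstate (PSyn_dfa (lrev L))) : jstate (jop (BLRQ_dfa L)) :=
  exist _ (dual_lang X) (dual_lang_BLRQ X).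

(* Union of sets of classes becomes intersection, the join of the dual. *)
Lemma phi_join X Y : phi (jjoin X Y) = jjoin (phi X) (phi Y).
Proof.
apply: jlargest_BLRQ => [|t [/jle_BLRQ HX /jle_BLRQ HY] x tx [Xx|Yx]].
- by split; apply/jle_BLRQ => x /= Hn Hx; apply: Hn; [left | right].
- exact: HX tx Xx.
- exact: HY tx Yx.
Qed.

Lemma phi_bot : phi (jbot _) = jbot (jop (BLRQ_dfa L)).
Proof. by apply: jlargest_BLRQ => // t _ w _ []. Qed.

Lemma phi_delta a X : phi (jdelta a X) = jdelta a (phi X).
Proof.
apply: jlargest_BLRQ => [|t /jle_BLRQ Ht x tx [w [Xw E]]].
  by apply/jle_BLRQ => x /= Hn Xx; apply: Hn; exists (rev x); rewrite -rcls_cons.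
have /rcls_eq Hx : rcls L x = rcls L (a :: rev w) by rewrite E rcls_cons revK.
by apply: (Ht (rev w) (BLRQ_saturated (proj2_sig t) Hx tx)); rewrite -syn_cls_rcls.
Qed.

Lemma phi_init : phi (jinit _) = jinit (jop (BLRQ_dfa L)).
Proof.
apply: jlargest_BLRQ => [/= | t Ht x tx Hx]; first by apply.
apply: Ht; apply: (BLRQ_saturated (proj2_sig t)) tx.
by apply/rcls_eq; rewrite Hx.
Qed.

Lemma phi_final X : jfinal (phi X) <-> jfinal X.
Proof.
split=> [Hn | [c [Xc [w [Ec Lw]]]] /jle_BLRQ Hle].
- apply: NNPP => HnX; apply: Hn; apply/jle_BLRQ => x /= Lx Xx.
  by apply: HnX; exists (rcls L x); split=> //; exists (rev x); rewrite /lrev revK.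
- by apply: (Hle (rev w) Lw); rewrite Ec syn_cls_rcls in Xc.
Qed.

Lemma phi_bijective : bijective phi.
Proof.
exists (fun t c => exists x, c = rcls L x /\ ~ proj1_sig t x) => [X | t].
- apply: functional_extensionality => c; apply: propositional_extensionality.
  have [x0 ->] := rcls_surj c.
  split=> [[x [-> Hnn]] | Xx0]; last by exists x0; split=> // /(_ Xx0).
  exact: NNPP Hnn.
- apply: BLRQ_state_ext => x /=; split=> [Hn | tx [y [/rcls_eq Hxy Hny]]].
  + by apply: NNPP => Hnx; apply: Hn; exists x.
  + exact/Hny/(BLRQ_saturated (proj2_sig t) Hxy).
Qed.

Lemma phi_At X x :
  proj1_sig (phi X) x <->
  (forall w, X (syn_cls (lrev L) w) -> ~ At L (rev w) x).
Proof.
split=> [HX w Xw /At_class Hat | H Xx].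
- by apply: HX; rewrite syn_cls_rcls in Xw; have /rcls_eq -> := Hat.
- by apply: (H (rev x) Xx); apply/At_class; rewrite revK.
Qed.

End RegularLanguage.

Theorem proposition3p13 (A : finType) (L : lang A) :
  regular L ->
  exists phi : jstate (PSyn_dfa (lrev L)) -> jstate (jop (BLRQ_dfa L)),
    jsl_iso phi /\
    forall X x, proj1_sig (phi X) x <->
      (forall w, X (syn_cls (lrev L) w) -> ~ At L (rev w) x).
Proof.
move=> [Q [d [q0 [F HF]]]].
have HL w : L w = F (foldl d q0 w) by apply: propositional_extensionality.
exists (phi HL); split; last exact: phi_At.
split; last exact: phi_bijective.
split; [exact: phi_join | exact: phi_bot | exact: phi_delta
       | exact: phi_init | exact: phi_final].
Qed.
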